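(* In the transaction packaging game described in the context, let $\sigma^*$ be a mixed strategy. Suppose there exists $w\in\mathbb{R}$ such that for every $\mathsf{tx}\in M$: if $p^{\sigma^*}(\mathsf{tx})=0$ then $v(\mathsf{tx})\exp(-\lambda p^{\sigma^*}(\mathsf{tx}))\le w$; if $0<p^{\sigma^*}(\mathsf{tx})<1$ then $v(\mathsf{tx})\exp(-\lambda p^{\sigma^*}(\mathsf{tx}))=w$; and if $p^{\sigma^*}(\mathsf{tx})=1$ then $v(\mathsf{tx})\exp(-\lambda p^{\sigma^*}(\mathsf{tx}))\ge w$. Then $\sigma^*$ is an equilibrium strategy.
   Context: Transaction packaging game. Fix a positive integer $k$ (block capacity), a real $\lambda>0$ (network latency parameter), a finite set $M$ (the mempool) of transactions with $|M|\ge k$, and a gas price function $v:M\to(0,\infty)$. Miners are indexed by $i\in[0,1]$. A pure strategy of a miner is a subset $D\subseteq M$ with $|D|=k$; let $\mathcal{S}$ be the set of such subsets. A mixed strategy is a probability distribution $\sigma$ on $\mathcal{S}$, and its marginal probability is $p^\sigma(\mathsf{tx})=\sum_{D\in\mathcal{S}}\sigma(D)\mathbf{1}[\mathsf{tx}\in D]$. Conditional on miner $i$ mining a block $B_i$ (drawn from her mixed strategy $\sigma_i$), the number $\gamma$ of other blocks mined is distributed as $\mathrm{Poisson}(\lambda)$; they are mined by miners chosen independently and uniformly at random from $[0,1]$, each such miner $j$ producing a block $B_j$ drawn independently from her mixed strategy $\sigma_j$. The utility of miner $i$ is $u_i(\sigma_i,\sigma_{-i})=\sum_{\mathsf{tx}\in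 M}p^{\sigma_i}(\mathsf{tx})\,v(\mathsf{tx})\,\Pr[\text{no other mined block }B_j\ (j\neq i)\text{ contains }\mathsf{tx}]$. A mixed strategy $\sigma^*$ is an equilibrium strategy if for every $i\in[0,1]$ and every mixed strategy $\sigma$, $u_i(\sigma,\sigma^*_{-i})\le u_i(\sigma^*,\sigma^*_{-i})$, where $\sigma^*_{-i}$ denotes the profile in which all miners other than $i$ use $\sigma^*$. *)

From HB Require Import structures.
From mathcomp Require Import all_boot all_order all_algebra.
From mathcomp Require Import all_classical all_reals all_analysis.
Set Implicit Arguments. Unset Strict Implicit. Unset Printing Implicit Defensive.
Import Order.TTheory GRing.Theory Num.Theory.
Local Open Scope ring_scope.

Section Game.
Variables (R : realType) (M : finType).

(* A mixed strategy: a probability distribution on the k-subsets of M,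
   represented as a function on all subsets vanishing off the k-subsets. *)
Definition mixed_strategy (k : nat) (sigma : {ffun {set M} -> R}) : Prop :=
  [/\ (forall D : {set M}, 0 <= sigma D),
      (forall D : {set M}, #|D| != k -> sigma D = 0) &
      \sum_(D : {set M}) sigma D = 1].

Definition marginal (sigma : {ffun {set M} -> R}) (tx : M) : R :=
  \sum_(D : {set M}) sigma D * (tx \in D)%:R.

(* Probability that none of the gamma ~ Poisson(lambda) other mined blocks
   contains a transaction that each of them (independently) contains with
   probability p:  sum_{n>=0} Pr[gamma = n] (1 - p)^n. *)
Definition no_other_prob (lambda p : R) : R :=
  limn (fun N => \sum_(0 <= n < N) poisson_pmf lambda n * (1 - p) ^+ n).

(* Utility of a miner playing sigma while all other miners play sigma_star. *)
Definition utility (lambda : R) (v : M -> R)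
    (sigma sigma_star : {ffun {set M} -> R}) : R :=
  \sum_(tx : M) marginal sigma tx * v tx
                 * no_other_prob lambda (marginal sigma_star tx).

Definition equilibrium (k : nat) (lambda : R) (v : M -> R)
    (sigma_star : {ffun {set M} -> R}) : Prop :=
  forall i : R, 0 <= i <= 1 ->
  forall sigma, mixed_strategy k sigma ->
    utility lambda v sigma sigma_star <= utility lambda v sigma_star sigma_star.

End Game.

From HB Require Import structures.
From mathcomp Require Import all_boot all_order all_algebra.
From mathcomp Require Import all_classical all_reals all_analysis.
From mathcomp Require Import ring.
Import Order.TTheory GRing.Theory Num.Theory.
Import numFieldTopology.Exports numFieldNormedType.Exports.
Local Open Scope ring_scope.

(* The probability that no other block contains [tx] is the Poisson generating
   function at [1 - p], i.e. [exp (- lambda p)]. Hence a miner's utility is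
   linear in her own marginals [q], with weights [f tx = v tx exp (- lambda p tx)]
   fixed by the others' marginals [p]. Marginals lie in [[0, 1]] and sum to the
   block size [k], so the gain of a deviation is [sum (q - p) f = sum (q - p) (f - w)];
   each term is nonpositive by the threshold condition: where [p = 0] we have
   [q >= p] and [f <= w], where [p = 1] we have [q <= p] and [f >= w], and in
   between [f = w]. *)

Lemma no_other_probE (R : realType) (lambda p : R) : 0 < lambda ->
  no_other_prob lambda p = expR (- lambda * p).
Proof.
move=> lambda_gt0; rewrite /no_other_prob.
have -> : (fun N => \sum_(0 <= n < N) poisson_pmf lambda n * (1 - p) ^+ n) =
          (fun N => expR (- lambda) * series (exp_coeff (lambda * (1 - p))) N).
  apply/funext => N; rewrite /series /= big_distrr /=; apply: eq_bigr => n _.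
  by rewrite /poisson_pmf lambda_gt0 /exp_coeff /= exprMn; ring.
have -> : expR (- lambda * p) = expR (- lambda) * expR (lambda * (1 - p)).
  by rewrite -expRD; congr expR; ring.
apply: cvg_lim => //; apply: cvgMl_tmp.
rewrite expRE /pseries -exp_coeffE.
exact: is_cvg_series_exp_coeff.
Qed.

Section Marginals.
Context {R : realType} {M : finType} {k : nat} {sigma : {ffun {set M} -> R}}.
Hypothesis sigma_mixed : mixed_strategy k sigma.

Lemma marginal_in01 tx : 0 <= marginal sigma tx <= 1.
Proof.
case: sigma_mixed => sigma_ge0 _ sigma_sum1; apply/andP; split.
  by apply: sumr_ge0 => D _; rewrite mulr_ge0.
rewrite -sigma_sum1; apply: ler_sum => D _.
by case: (tx \in D); rewrite ?mulr1 ?mulr0.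
Qed.

Lemma sum_marginal : \sum_tx marginal sigma tx = k%:R.
Proof.
case: sigma_mixed => _ sigma_off_k sigma_sum1.
rewrite /marginal exchange_big /=.
transitivity (\sum_D sigma D * k%:R); last by rewrite -big_distrl /= sigma_sum1 mul1r.
apply: eq_bigr => D _; rewrite -big_distrr /=.
have [<-|/sigma_off_k ->] := eqVneq #|D| k; last by rewrite !mul0r.
congr (_ * _); rewrite -sum1_card natr_sum [RHS]big_mkcond /=.
by apply: eq_bigr => tx _; case: (tx \in D).
Qed.

End Marginals.

Lemma utilityE (R : realType) (M : finType) (lambda : R) (v : M -> R)
    (sigma sigma_star : {ffun {set M} -> R}) : 0 < lambda ->
  utility lambda v sigma sigma_star =
  \sum_tx marginal sigma tx * (v tx * expR (- lambda * marginal sigma_star tx)).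
Proof.
by move=> lambda_gt0; apply: eq_bigr => tx _; rewrite no_other_probE // mulrA.
Qed.

Lemma sum_mul_le_threshold (R : realDomainType) (I : finType)
    (f p q : I -> R) (w : R) :
  (forall i, 0 <= p i <= 1) -> (forall i, 0 <= q i <= 1) ->
  \sum_i q i = \sum_i p i ->
  (forall i, [/\ p i = 0 -> f i <= w, 0 < p i < 1 -> f i = w &
                 p i = 1 -> w <= f i]) ->
  \sum_i q i * f i <= \sum_i p i * f i.
Proof.
move=> p01 q01 sum_qp threshold.
have term_le0 i : (q i - p i) * (f i - w) <= 0.
  have /andP[q_ge0 q_le1] := q01 i; have /andP[p_ge0 p_le1] := p01 i.
  case: (threshold i) => f_p0 f_p01 f_p1.
  have [p0|p_neq0] := eqVneq (p i) 0.
    by rewrite mulr_ge0_le0 ?p0 ?subr0 ?subr_le0 ?f_p0.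
  have [p1|p_neq1] := eqVneq (p i) 1.
    by rewrite mulr_le0_ge0 ?p1 ?subr_le0 ?subr_ge0 ?f_p1.
  by rewrite f_p01 ?subrr ?mulr0 // !lt_neqAle eq_sym p_neq0 p_neq1 p_ge0.
rewrite -subr_le0 -sumrB.
rewrite (eq_bigr (fun i => (q i - p i) * (f i - w) + (q i - p i) * w));
  last by move=> i _; ring.
rewrite big_split /= -big_distrl /= sumrB sum_qp subrr mul0r addr0.
exact: sumr_le0.
Qed.

Theorem lemma3p2 (R : realType) (M : finType) (k : nat) (lambda : R)
    (v : M -> R) (sigma_star : {ffun {set M} -> R}) :
  (0 < k)%N -> (k <= #|M|)%N -> 0 < lambda ->
  (forall tx, 0 < v tx) ->
  mixed_strategy k sigma_star ->
  (exists w : R, forall tx : M,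
      [/\ marginal sigma_star tx = 0 ->
            v tx * expR (- lambda * marginal sigma_star tx) <= w,
          0 < marginal sigma_star tx < 1 ->
            v tx * expR (- lambda * marginal sigma_star tx) = w &
          marginal sigma_star tx = 1 ->
            v tx * expR (- lambda * marginal sigma_star tx) >= w]) ->
  equilibrium k lambda v sigma_star.
Proof.
move=> _ _ lambda_gt0 _ star_mixed [w threshold] _ _ sigma sigma_mixed.
rewrite !utilityE //; apply: (@sum_mul_le_threshold _ _ _ _ _ w) => //.
- exact: marginal_in01 star_mixed.
- exact: marginal_in01 sigma_mixed.
- by rewrite (sum_marginal sigma_mixed) (sum_marginal star_mixed).
Qed.
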